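(* Let $A$ be a finite set and let $f,g$ be partial functions on $A$ with $f \in \mathrm{cPol}(\rho,\rho')$ and $g \in \mathrm{cPol}(\sigma,\sigma')$, where $\rho'\subseteq\rho\subseteq A^h$, $\sigma'\subseteq\sigma\subseteq A^h$ and $\sigma' \subseteq \rho \subseteq \sigma$. Then $f \star g \in \mathrm{cPol}(\rho,\rho')$.
   Context: A partial function of arity $n$ on $A$ is a map $f:\operatorname{dom} f\to A$ with $\operatorname{dom} f\subseteq A^n$. An $n$-ary $f$ preserves the relation pair $(\rho,\rho')$ with $\rho'\subseteq\rho\subseteq A^h$ (written $f\in\mathrm{cPol}(\rho,\rho')$) if for every $h\times n$ matrix whose columns belong to $\rho$ and whose rows belong to $\operatorname{dom} f$, the column obtained by applying $f$ to each row belongs to $\rho'$. For $f$ $n$-ary and $g$ $m$-ary, $f\star g$ is the $(n+m-1)$-ary partial function $(f\star g)(x_1,\dots,x_{n+m-1})=f(g(x_1,\dots,x_m),x_{m+1},\dots,x_{n+m-1})$, defined exactly when $(x_1,\dots,x_m)\in\operatorname{dom} g$ and $(g(x_1,\dots,x_m),x_{m+1},\dots,x_{n+m-1})\in\operatorname{dom} f$. *)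

From mathcomp Require Import all_boot.
Set Implicit Arguments. Unset Strict Implicit. Unset Printing Implicit Defensive.

Definition pfun (T : Type) (n : nat) := ('I_n -> T) -> option T.

Definition hrel (T : Type) (h : nat) := ('I_h -> T) -> Prop.

Definition rsub (T : Type) (h : nat) (r s : hrel T h) := forall x, r x -> s x.

(* f \in cPol(rho, rho'): for every h x n matrix M (M i j = row i, column j)
   whose columns lie in rho and whose rows lie in dom f, the column obtained
   by applying f to each row lies in rho'. *)
Definition cPol (T : Type) (n h : nat) (rho rho' : hrel T h) (f : pfun T n) :=
  forall (M : 'I_h -> 'I_n -> T) (c : 'I_h -> T),
    (forall j : 'I_n, rho (fun i => M i j)) ->
    (forall i : 'I_h, f (M i) = Some (c i)) ->
    rho' c.

(* f of arity n.+1, g of arity m.+1; f * g has arity (n+m).+1 = (n+1)+(m+1)-1: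
   (f*g)(x_0..x_{n+m}) = f(g(x_0..x_m), x_{m+1}, ..., x_{m+n}). *)
Definition star (T : Type) (n m : nat) (f : pfun T n.+1) (g : pfun T m.+1)
  : pfun T (n + m).+1 :=
  fun x =>
    match g (fun i : 'I_m.+1 => x (inord i)) with
    | None => None
    | Some y => f (fun k : 'I_n.+1 => if val k == 0 then y else x (inord (m + k)))
    end.

From mathcomp Require Import all_boot.

(* Given an h x (n+m+1) matrix M witnessing the claim for f * g, apply g to
   its first m+1 columns: these lie in rho, hence in sigma, so the resulting
   column lies in sigma', hence in rho.  Replacing those m+1 columns of M by
   this single column gives an h x (n+1) matrix with columns in rho and rows in
   dom f, and f maps it row by row to the same column as f * g maps M. *)

Section StarPolymorphism.

Variables (T : Type) (n m h : nat) (f : pfun T n.+1) (g : pfun T m.+1).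

Definition star_inner (x : 'I_(n + m).+1 -> T) : 'I_m.+1 -> T :=
  fun j => x (inord j).

Definition star_outer (x : 'I_(n + m).+1 -> T) (y : T) : 'I_n.+1 -> T :=
  fun k => if val k == 0 then y else x (inord (m + k)).

Lemma star_Some {x : 'I_(n + m).+1 -> T} {c : T} :
  star f g x = Some c ->
  exists2 y, g (star_inner x) = Some y & f (star_outer x y) = Some c.
Proof. by rewrite /star; case: (g _) => [y|] // fy; exists y. Qed.

Lemma cPol_star (rho rho' sigma sigma' : hrel T h) :
  rsub sigma' rho -> rsub rho sigma ->
  cPol rho rho' f -> cPol sigma sigma' g -> cPol rho rho' (star f g).
Proof.
move=> s'r rs Hf Hg M c Mrho Mdom.
pose G i := odflt (c i) (g (star_inner (M i))).
have gG i : g (star_inner (M i)) = Some (G i).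
  by rewrite /G; have [y -> _] := star_Some (Mdom i).
have fG i : f (star_outer (M i) (G i)) = Some (c i).
  by have [y gy] := star_Some (Mdom i); rewrite gG in gy; case: gy => ->.
have Grho : rho G.
  apply/s'r/(Hg (fun i => star_inner (M i))) => // j.
  exact/rs/Mrho.
apply: (Hf (fun i => star_outer (M i) (G i))) => // k.
by rewrite /star_outer; case: (val k == 0).
Qed.

End StarPolymorphism.

Theorem mainTheorem13 (A : finType) (n m h : nat)
  (f : pfun A n.+1) (g : pfun A m.+1)
  (rho rho' sigma sigma' : hrel A h) :
  rsub rho' rho -> rsub sigma' sigma ->
  rsub sigma' rho -> rsub rho sigma ->
  cPol rho rho' f -> cPol sigma sigma' g ->
  cPol rho rho' (star f g).
Proof. by move=> _ _; exact: cPol_star. Qed.
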